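(* Let $(R,\mathfrak m)$ be a Noetherian local ring, $X$ a finitely generated $R$-module, $N$ a Burch submodule of $X$, $t\ge1$ an integer, and $M$ a finitely generated $R$-module with $\operatorname{Tor}_t^R(M,N)=\operatorname{Tor}_t^R(M,X/N)=0$. Then $\operatorname{pd}_R M<t$.
   Context: For a submodule $N\subseteq X$, $(N:_X\mathfrak m)=\{x\in X:\mathfrak m x\subseteq N\}$. $N$ is a Burch submodule of $X$ if $\mathfrak m(N:_X\mathfrak m)\neq\mathfrak m N$. The projective dimension of the zero module is $-\infty$. *)

(* Commutative algebra of finitely generated modules, set up
   concretely: submodules are Prop-valued predicates, Tor is computed from a
   finite free resolution given by matrices over R. *)
From mathcomp Require Import all_boot all_order all_algebra.
Set Implicit Arguments. Unset Strict Implicit. Unset Printing Implicit Defensive.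
Import GRing.Theory.
Local Open Scope ring_scope.

Section Defs.
Variable R : comNzRingType.

Definition ideal (I : R -> Prop) : Prop :=
  I 0 /\ (forall x y, I x -> I y -> I (x + y)) /\ (forall a x, I x -> I (a * x)).

Definition fg_ideal (I : R -> Prop) : Prop :=
  exists s : seq R, forall x, I x <-> exists c : 'I_(size s) -> R, x = \sum_i c i * s`_i.

Definition noetherian : Prop := forall I, ideal I -> fg_ideal I.

Definition unitR (x : R) : Prop := exists y, y * x = 1.

Definition local_ring (m : R -> Prop) : Prop :=
  ideal m /\ ~ m 1 /\ (forall x, ~ m x -> unitR x).

Definition submodule (X : lmodType R) (N : X -> Prop) : Prop :=
  N 0 /\ (forall x y, N x -> N y -> N (x + y)) /\ (forall a x, N x -> N (a *: x)).

Definition fg_module (X : lmodType R) : Prop :=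
  exists s : seq X, forall x : X, exists c : 'I_(size s) -> R, x = \sum_i c i *: s`_i.

Definition ideal_mul (X : lmodType R) (I : R -> Prop) (L : X -> Prop) : X -> Prop :=
  fun x => exists n (a : 'I_n -> R) (l : 'I_n -> X),
    (forall i, I (a i)) /\ (forall i, L (l i)) /\ x = \sum_i a i *: l i.

Definition colon (X : lmodType R) (N : X -> Prop) (m : R -> Prop) : X -> Prop :=
  fun x => forall a, m a -> N (a *: x).

Definition burch (X : lmodType R) (m : R -> Prop) (N : X -> Prop) : Prop :=
  ~ (forall x, ideal_mul m (colon N m) x <-> ideal_mul m N x).

(** Finite free resolutions  ... -> R^(b 2) -> R^(b 1) -> R^(b 0) -> M -> 0.
    Elements of R^(b i) are row vectors; the differential
    R^(b i.+1) -> R^(b i) is  u |-> u *m D i;  the augmentation sends the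
    j-th basis vector of R^(b 0) to g j. *)
Definition aug (M : lmodType R) (n : nat) (g : 'I_n -> M) (u : 'rV[R]_n) : M :=
  \sum_j u 0 j *: g j.

Definition free_resolution (M : lmodType R) (b : nat -> nat)
    (D : forall i, 'M[R]_(b i.+1, b i)) (g : 'I_(b 0) -> M) : Prop :=
  (forall x : M, exists u : 'rV[R]_(b 0), x = aug g u) /\
  (forall u : 'rV[R]_(b 0), aug g u = 0 <-> exists w : 'rV[R]_(b 1), u = w *m D 0) /\
  (forall i (u : 'rV[R]_(b i.+1)),
      u *m D i = 0 <-> exists w : 'rV[R]_(b i.+2), u = w *m D i.+1).

(** A *m - tensored with a module:  R^m ⊗ X = X^m  ->  R^n ⊗ X = X^n *)
Definition tmap (X : lmodType R) (m n : nat) (A : 'M[R]_(m, n)) (x : 'I_m -> X)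
  : 'I_n -> X := fun k => \sum_j A j k *: x j.

(** Tor_t^R(M, P/Q) = 0, computed from the free resolution (b, D) of M, for
    submodules Q ⊆ P of X (elements of (P/Q)^k are represented by tuples in
    P^k, modulo Q^k).  Tor_t = H_t(F ⊗ P/Q). *)
Definition Tor_vanishes (X : lmodType R) (b : nat -> nat)
    (D : forall i, 'M[R]_(b i.+1, b i)) (t : nat) (P Q : X -> Prop) : Prop :=
  match t with
  | 0 => forall x : 'I_(b 0) -> X, (forall j, P (x j)) ->
           exists y : 'I_(b 1) -> X, (forall j, P (y j)) /\
             (forall j, Q (x j - tmap (D 0) y j))
  | s.+1 => forall x : 'I_(b s.+1) -> X, (forall j, P (x j)) ->
           (forall k, Q (tmap (D s) x k)) ->
           exists y : 'I_(b s.+2) -> X, (forall j, P (y j)) /\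
             (forall j, Q (x j - tmap (D s.+1) y j))
  end.

(** pd_R M < t : M has a finite free resolution of length < t
    (M = 0 has the resolution with all b i = 0, matching pd 0 = -oo). *)
Definition pd_lt (M : lmodType R) (t : nat) : Prop :=
  exists (b : nat -> nat) (D : forall i, 'M[R]_(b i.+1, b i)) (g : 'I_(b 0) -> M),
    free_resolution D g /\ (forall i, (t <= i)%N -> b i = 0%N).

End Defs.

(* A Burch pair, x in (N :_X m) and a in m with a x outside mN, combined with
   Tor_t(M, X/N) = 0 and Tor_t(M, N) = 0, shows: whenever u *m D (t-1) and
   D t *m f have all their entries in m, the pairing u *m f lies in m.
   Over the local ring R this orthogonality splits F_(t+1) -> F_t -> F_(t-1):
   pivoting on a unit entry of D (t-1), or, when there is none, on a unit entry
   of D t produced by the orthogonality, lowers the rank of F_t, and by induction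
   the row space of D (t-1) is a direct summand of F_(t-1) with free complement.
   So the (t-1)-st syzygy of M is free and the resolution stops at length t-1. *)

From mathcomp Require Import all_boot all_order all_algebra perm.
From Stdlib Require Import Classical.
Set Implicit Arguments. Unset Strict Implicit. Unset Printing Implicit Defensive.
Import GRing.Theory.
Local Open Scope ring_scope.

Section Pivoting.
Variable R : comNzRingType.

Definition mx_inverse n (P P' : 'M[R]_n) := P' *m P = 1%:M /\ P *m P' = 1%:M.

Lemma mx_inverse1 n : mx_inverse (1%:M : 'M_n) 1%:M.
Proof. by split; rewrite mul1mx. Qed.

Lemma mx_inverse_sym n (P P' : 'M[R]_n) : mx_inverse P P' -> mx_inverse P' P.
Proof. by case. Qed.

Lemma mx_inverseM n (P P' Q Q' : 'M[R]_n) :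
  mx_inverse P P' -> mx_inverse Q Q' -> mx_inverse (P *m Q) (Q' *m P').
Proof.
move=> [hP'P hPP'] [hQ'Q hQQ']; split.
  by rewrite mulmxA -(mulmxA Q') hP'P mulmx1 hQ'Q.
by rewrite mulmxA -(mulmxA P) hQQ' mulmx1 hPP'.
Qed.

Lemma mx_inverse_tperm n (i j : 'I_n) : mx_inverse (tperm_mx i j) (tperm_mx i j).
Proof. by rewrite /mx_inverse /tperm_mx -perm_mxM tperm2 perm_mx1. Qed.

Definition corner_mx m k (C0 : 'M[R]_(m, k)) : 'M[R]_(1 + m, 1 + k) :=
  block_mx 1%:M 0 0 C0.

Lemma corner_unit_elim m k (C : 'M[R]_(1 + m, 1 + k)) y :
  y * C 0 0 = 1 ->
  exists (P P' : 'M[R]_(1 + m)) (Q Q' : 'M[R]_(1 + k)) (C0 : 'M[R]_(m, k)),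
    [/\ mx_inverse P P', mx_inverse Q Q' & P *m C *m Q = corner_mx C0].
Proof.
move=> hy.
set c := ulsubmx C; set r := ursubmx C; set l := dlsubmx C; set d := drsubmx C.
have hc : c = (C 0 0)%:M.
  by rewrite [c]mx11_scalar !mxE; congr (C _ _ )%:M; apply/val_inj.
have hcy : c *m y%:M = 1%:M by rewrite hc -scalar_mxM mulrC hy.
have hyc : y%:M *m c = 1%:M by rewrite hc -scalar_mxM hy.
pose P := block_mx y%:M 0 (- (l *m y%:M)) 1%:M.
pose P' := block_mx c 0 l 1%:M.
pose Q := block_mx 1%:M (- (y%:M *m r)) 0 1%:M.
pose Q' := block_mx 1%:M (y%:M *m r) 0 1%:M.
exists P, P', Q, Q', (d - l *m (y%:M *m r)); split.
- split; rewrite /P /P' mulmx_block (scalar_mx_block 1 m)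
    ?mulmx0 ?mul0mx ?addr0 ?add0r ?mulmx1 ?mul1mx.
    by rewrite hcy addrN.
  by rewrite hyc mulNmx -mulmxA hyc mulmx1 addNr.
- split; rewrite /Q /Q' mulmx_block (scalar_mx_block 1 k)
    ?mulmx0 ?mul0mx ?addr0 ?add0r ?mulmx1 ?mul1mx.
    by rewrite addNr.
  by rewrite addrN.
rewrite -[C]submxK /P /Q -/c -/r -/l -/d !mulmx_block.
rewrite ?mulmx0 ?mul0mx ?addr0 ?add0r ?mulmx1 ?mul1mx.
rewrite hyc mul1mx addNr mulNmx -mulmxA hyc mulmx1 addNr mul0mx add0r.
by rewrite mulNmx -mulmxA addrC.
Qed.

Lemma mx_pivot m k (C : 'M[R]_(1 + m, 1 + k)) i j y :
  y * C i j = 1 ->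
  exists (P P' : 'M[R]_(1 + m)) (Q Q' : 'M[R]_(1 + k)) (C0 : 'M[R]_(m, k)),
    [/\ mx_inverse P P', mx_inverse Q Q' & P *m C *m Q = corner_mx C0].
Proof.
pose C1 := tperm_mx 0 i *m C *m tperm_mx 0 j.
have -> : C i j = C1 0 0 by rewrite /C1 -xrowE -xcolE !mxE !tpermL.
move=> /corner_unit_elim [P [P' [Q [Q' [C0 [hP hQ hPCQ]]]]]].
exists (P *m tperm_mx 0 i), (tperm_mx 0 i *m P'), (tperm_mx 0 j *m Q),
  (Q' *m tperm_mx 0 j), C0; split.
- exact: mx_inverseM hP (mx_inverse_tperm 0 i).
- exact: mx_inverseM (mx_inverse_tperm 0 j) hQ.
by rewrite -hPCQ /C1 !mulmxA.
Qed.

End Pivoting.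

Section MatrixEntries.
Variables (R : comNzRingType) (m : R -> Prop).
Hypothesis hm : ideal m.

Definition mx_entries_in p q (A : 'M[R]_(p, q)) := forall i j, m (A i j).

Lemma ideal_sum (I : finType) (F : I -> R) : (forall i, m (F i)) -> m (\sum_i F i).
Proof. by case: hm => m0 [mD _] hF; elim/big_ind: _. Qed.

Lemma mx_entries_in_mull p n q (A : 'M[R]_(p, n)) (B : 'M[R]_(n, q)) :
  mx_entries_in A -> mx_entries_in (A *m B).
Proof.
case: hm => _ [_ mM] hA i j; rewrite mxE; apply: ideal_sum => k.
by rewrite mulrC; apply: mM.
Qed.

Lemma mx_entries_in_mulr p n q (A : 'M[R]_(p, n)) (B : 'M[R]_(n, q)) :
  mx_entries_in B -> mx_entries_in (A *m B).
Proof.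
case: hm => _ [_ mM] hB i j; rewrite mxE; apply: ideal_sum => k; exact: mM.
Qed.

Lemma mx_entries_in_row0 p n q (A : 'M[R]_(p, q)) :
  mx_entries_in A -> mx_entries_in (row_mx (0 : 'M_(p, n)) A).
Proof.
by move=> hA i j; rewrite mxE; case: splitP => k _; rewrite ?mxE; [case: hm | apply: hA].
Qed.

Lemma mx_entries_in_col0 p n q (A : 'M[R]_(p, q)) :
  mx_entries_in A -> mx_entries_in (col_mx (0 : 'M_(n, q)) A).
Proof.
by move=> hA i j; rewrite mxE; case: splitP => k _; rewrite ?mxE; [case: hm | apply: hA].
Qed.

End MatrixEntries.

Section FreeComplement.
Variable R : comNzRingType.

Definition ker_rowspace (V : nmodType) n1 n0 (phi : 'rV[R]_n0 -> V) (A : 'M[R]_(n1, n0)) :=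
  forall u : 'rV_n0, phi u = 0 <-> exists w : 'rV_n1, u = w *m A.

Definition mx_exact n2 n1 n0 (A : 'M[R]_(n2, n1)) (B : 'M[R]_(n1, n0)) :=
  ker_rowspace (mulmx^~ B) A.

Definition free_complement n q q' (A : 'M[R]_(n, q)) (E : 'M[R]_(q', q)) :=
  (forall v : 'rV_q, exists w z, v = w *m A + z *m E) /\
  (forall (w : 'rV_n) (z : 'rV_q'), w *m A + z *m E = 0 -> z = 0).

Definition has_free_complement n q (A : 'M[R]_(n, q)) :=
  exists q' (E : 'M[R]_(q', q)), free_complement A E.

Definition orthogonal_mod (m : R -> Prop) p n q (B : 'M[R]_(p, n)) (A : 'M[R]_(n, q)) :=
  forall (u : 'rV_n) (f : 'cV_n),
    mx_entries_in m (u *m A) -> mx_entries_in m (B *m f) -> m ((u *m f) 0 0).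

Lemma mx_exact_mul0 n2 n1 n0 (A : 'M[R]_(n2, n1)) (B : 'M[R]_(n1, n0)) :
  mx_exact A B -> A *m B = 0.
Proof.
move=> hex; apply/row_matrixP => i; rewrite row_mul row0.
by apply/hex; exists (delta_mx 0 i); rewrite -rowE.
Qed.

Lemma has_free_complement0 q (A : 'M[R]_(0, q)) : has_free_complement A.
Proof.
exists q, 1%:M; split=> [v | w z]; last by rewrite [w]thinmx0 mul0mx add0r mulmx1.
by exists 0, v; rewrite mul0mx add0r mulmx1.
Qed.

Section BaseChange.
Variables (p n q : nat) (P P' : 'M[R]_p) (Q Q' : 'M[R]_n) (S S' : 'M[R]_q).
Hypotheses (hP : mx_inverse P P') (hQ : mx_inverse Q Q') (hS : mx_inverse S S').
Variables (B : 'M[R]_(p, n)) (A : 'M[R]_(n, q)).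

Lemma mx_exact_basechange :
  mx_exact B A -> mx_exact (P *m B *m Q') (Q *m A *m S).
Proof.
case: hP hQ hS => [hP'P _] [hQ'Q hQQ'] [_ hSS'] hex u; split.
  move=> /(congr1 (mulmx^~ S')); rewrite -!mulmxA hSS' mulmx1 mul0mx mulmxA.
  move=> /hex [w hw]; exists (w *m P').
  by rewrite -[u]mulmx1 -hQQ' mulmxA hw -!mulmxA (mulmxA P') hP'P mul1mx.
case=> w ->; have hBA := mx_exact_mul0 hex.
by rewrite -!mulmxA (mulmxA Q') hQ'Q mul1mx (mulmxA B) hBA mul0mx !mulmx0.
Qed.

Lemma orthogonal_mod_basechange (m : R -> Prop) : ideal m ->
  orthogonal_mod m B A -> orthogonal_mod m (P *m B *m Q') (Q *m A *m S).
Proof.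
case: hP hQ hS => [hP'P _] [_ hQQ'] [_ hSS'] hm horth u f hu hf.
have -> : u *m f = u *m Q *m (Q' *m f) by rewrite mulmxA -(mulmxA u) hQQ' mulmx1.
apply: horth.
  have := mx_entries_in_mull hm S' hu.
  by rewrite -!mulmxA hSS' mulmx1 mulmxA.
have := mx_entries_in_mulr hm P' hf.
by rewrite !mulmxA hP'P mul1mx -mulmxA.
Qed.

Lemma has_free_complement_basechange :
  has_free_complement (Q *m A *m S) -> has_free_complement A.
Proof.
case: hQ hS => [hQ'Q _] [hS'S hSS'] [q' [E [hsp hind]]].
exists q', (E *m S'); split=> [v | w z hwz].
  have [w [z hvS]] := hsp (v *m S); exists (w *m Q), z.
  by rewrite -[v]mulmx1 -hSS' mulmxA hvS mulmxDl -!mulmxA hSS' mulmx1.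
apply: (hind (w *m Q')).
have -> : w *m Q' *m (Q *m A *m S) + z *m E = (w *m A + z *m (E *m S')) *m S.
  by rewrite mulmxDl !mulmxA -(mulmxA w Q') hQ'Q mulmx1 -(mulmxA _ S') hS'S mulmx1.
by rewrite hwz mul0mx.
Qed.

End BaseChange.

Lemma mx_exact_corner_r p n q (B : 'M[R]_(p, 1 + n)) (A0 : 'M[R]_(n, q)) :
  mx_exact B (corner_mx A0) -> exists B0, B = row_mx 0 B0 /\ mx_exact B0 A0.
Proof.
move=> hex; have := mx_exact_mul0 hex.
move: hex; rewrite -[B]hsubmxK /corner_mx mul_row_block !mulmx0 mulmx1 addr0 add0r -row_mx0.
move=> hex /eq_row_mx [hl hB0A0]; rewrite hl in hex *.
exists (rsubmx B); split=> // u0; split=> [hu0 | [w ->]]; last by rewrite -mulmxA hB0A0 mulmx0.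
have hrow : row_mx (0 : 'rV_1) u0 *m corner_mx A0 = 0.
  by rewrite /corner_mx mul_row_block !mulmx0 mul0mx !add0r hu0 row_mx0.
have [w hw] := (hex _).1 hrow.
by exists w; move: hw; rewrite mul_mx_row mulmx0 => /eq_row_mx [].
Qed.

Lemma mx_exact_corner_l p n q (B0 : 'M[R]_(p, n)) (A : 'M[R]_(1 + n, q)) :
  mx_exact (corner_mx B0) A -> exists A0, A = col_mx 0 A0 /\ mx_exact B0 A0.
Proof.
move=> hex; have := mx_exact_mul0 hex.
move: hex; rewrite -[A]vsubmxK /corner_mx mul_block_col !mul0mx mul1mx addr0 add0r -col_mx0.
move=> hex /eq_col_mx [hu hB0A0]; rewrite hu in hex *.
exists (dsubmx A); split=> // u0; split=> [hu0 | [w ->]]; last by rewrite -mulmxA hB0A0 mulmx0.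
have hrow : row_mx (0 : 'rV_1) u0 *m col_mx 0 (dsubmx A) = 0.
  by rewrite mul_row_col mul0mx add0r.
have [w hw] := (hex _).1 hrow.
exists (rsubmx w); move: hw; rewrite -{1}(hsubmxK w) mul_row_block.
by rewrite !mulmx0 mulmx1 add0r addr0 => /eq_row_mx [].
Qed.

Lemma orthogonal_mod_corner_r (m : R -> Prop) p n q (B0 : 'M[R]_(p, n)) (A0 : 'M[R]_(n, q)) :
  ideal m -> orthogonal_mod m (row_mx (0 : 'M_(p, 1)) B0) (corner_mx A0) ->
  orthogonal_mod m B0 A0.
Proof.
move=> hm horth u0 f0 hu0 hf0.
have := horth (row_mx 0 u0) (col_mx 0 f0); rewrite !mul_row_col !mul0mx !add0r.
by apply=> //; rewrite mul_mx_row mulmx0; apply: mx_entries_in_row0.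
Qed.

Lemma orthogonal_mod_corner_l (m : R -> Prop) p n q (B0 : 'M[R]_(p, n)) (A0 : 'M[R]_(n, q)) :
  ideal m -> orthogonal_mod m (corner_mx B0) (col_mx (0 : 'M_(1, q)) A0) ->
  orthogonal_mod m B0 A0.
Proof.
move=> hm horth u0 f0 hu0 hf0.
have := horth (row_mx 0 u0) (col_mx 0 f0); rewrite !mul_row_col !mul0mx !add0r.
apply=> //; rewrite /corner_mx mul_block_col !mulmx0 mul0mx !add0r.
exact: mx_entries_in_col0.
Qed.

Lemma has_free_complement_corner_r n q (A0 : 'M[R]_(n, q)) :
  has_free_complement A0 -> has_free_complement (corner_mx A0).
Proof.
case=> [q' [E0 [hsp hind]]]; exists q', (row_mx 0 E0).
rewrite /corner_mx; split=> [v | w z].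
  have [w0 [z hz]] := hsp (rsubmx v); exists (row_mx (lsubmx v) w0), z.
  rewrite mul_row_block mul_mx_row !mulmx0 mulmx1 add0r addr0 add_row_mx addr0 -hz.
  by rewrite hsubmxK.
rewrite -[w]hsubmxK mul_row_block mul_mx_row !mulmx0 mulmx1 add0r addr0 add_row_mx.
by rewrite addr0 -row_mx0 => /eq_row_mx [_ /hind].
Qed.

Lemma has_free_complement_corner_l n q (A0 : 'M[R]_(n, q)) :
  has_free_complement A0 -> has_free_complement (col_mx (0 : 'M_(1, q)) A0).
Proof.
case=> [q' [E [hsp hind]]]; exists q', E; split=> [v | w z].
  have [w0 [z ->]] := hsp v; exists (row_mx 0 w0), z.
  by rewrite mul_row_col mul0mx add0r.
by rewrite -[w]hsubmxK mul_row_col mulmx0 add0r => /hind.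
Qed.

End FreeComplement.

Section LocalSplitting.
Variables (R : comNzRingType) (m : R -> Prop).
Hypothesis hloc : local_ring m.

Lemma orthogonal_mod_unit_col p n q (B : 'M[R]_(p, 1 + n)) (A : 'M[R]_(1 + n, q)) :
  mx_entries_in m A -> orthogonal_mod m B A -> exists i, ~ m (B i 0).
Proof.
case: hloc => hm [hm1 _] hA horth; apply: NNPP => hB; apply: hm1.
have := horth (delta_mx 0 0) (delta_mx 0 0); rewrite mul_delta_mx mxE !eqxx; apply.
  by rewrite -rowE => i j; rewrite mxE; apply: hA.
by rewrite -colE => i j; rewrite mxE; apply: NNPP => hBi; apply: hB; exists i.
Qed.

Theorem orthogonal_mod_free_complement n p q (B : 'M[R]_(p, n)) (A : 'M[R]_(n, q)) :
  mx_exact B A -> orthogonal_mod m B A -> has_free_complement A.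
Proof.
have [hm [_ hunit]] := hloc.
(* Pivot on a unit entry of A if there is one, otherwise on the unit entry of B
   given by orthogonality; either way the middle rank drops by one. *)
elim: n p q B A => [|n IH] p q B A hex horth; first exact: has_free_complement0.
have [[i [j hij]] | hA] := classic (exists i j, ~ m (A i j)).
- case: q A hex horth i j hij => [|q] A hex horth i j; first by case: j.
  move=> /hunit [y /mx_pivot [P [P' [Q [Q' [A0 [hP hQ hPAQ]]]]]]].
  apply: (has_free_complement_basechange hP hQ); rewrite hPAQ.
  have := mx_exact_basechange (mx_inverse1 _ _) hP hQ hex.
  rewrite hPAQ => /mx_exact_corner_r [B0 [hB hex0]].
  apply/has_free_complement_corner_r/(IH _ _ B0 _ hex0).
  apply: (orthogonal_mod_corner_r hm); rewrite -hB -hPAQ.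
  exact (orthogonal_mod_basechange (mx_inverse1 _ _) hP hQ hm horth).
- have hAm : mx_entries_in m A by move=> k l; apply: NNPP => hkl; apply: hA; exists k, l.
  have [i hi] := orthogonal_mod_unit_col hAm horth.
  case: p B hex horth i hi => [|p] B hex horth i; first by case: i.
  move=> /hunit [y /mx_pivot [P [P' [Q [Q' [B0 [hP hQ hPBQ]]]]]]].
  have hQ' := mx_inverse_sym hQ; have h1 := mx_inverse1 R q.
  apply: (has_free_complement_basechange hQ' h1).
  have := mx_exact_basechange hP hQ' h1 hex.
  rewrite hPBQ => /mx_exact_corner_l [A0 [hA0 hex0]]; rewrite hA0.
  apply/has_free_complement_corner_l/(IH _ _ B0 _ hex0).
  apply: (orthogonal_mod_corner_l hm); rewrite -hA0 -hPBQ.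
  exact (orthogonal_mod_basechange hP hQ' h1 hm horth).
Qed.

End LocalSplitting.

Section ModuleLemmas.
Variables (R : comNzRingType) (X : lmodType R).

Lemma tmap_comp a b c (B : 'M[R]_(a, b)) (A : 'M[R]_(b, c)) (y : 'I_a -> X) k :
  tmap A (tmap B y) k = tmap (B *m A) y k.
Proof.
rewrite /tmap; under eq_bigr do rewrite scaler_sumr.
rewrite exchange_big /=; apply: eq_bigr => l _.
rewrite mxE scaler_suml; apply: eq_bigr => j _.
by rewrite scalerA mulrC.
Qed.

Lemma tmap_scale_row n q (A : 'M[R]_(n, q)) (u : 'rV_n) (x : X) k :
  tmap A (fun j => u 0 j *: x) k = (u *m A) 0 k *: x.
Proof.
rewrite /tmap mxE scaler_suml; apply: eq_bigr => j _.
by rewrite scalerA mulrC.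
Qed.

Lemma tmapZ n q (A : 'M[R]_(n, q)) (a : R) (y : 'I_n -> X) k :
  tmap A (fun j => a *: y j) k = a *: tmap A y k.
Proof.
by rewrite /tmap scaler_sumr; apply: eq_bigr => j _; rewrite !scalerA mulrC.
Qed.

Lemma tmap0 n q (y : 'I_n -> X) k : tmap (0 : 'M[R]_(n, q)) y k = 0.
Proof. by rewrite /tmap big1 // => j _; rewrite mxE scale0r. Qed.

Lemma sum_scale_tmap n q (A : 'M[R]_(n, q)) (y : 'I_n -> X) (f : 'cV_q) :
  \sum_j f j 0 *: tmap A y j = \sum_l (A *m f) l 0 *: y l.
Proof.
rewrite /tmap; under eq_bigr do rewrite scaler_sumr.
rewrite exchange_big /=; apply: eq_bigr => l _.
rewrite mxE scaler_suml; apply: eq_bigr => j _.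
by rewrite scalerA mulrC.
Qed.

Lemma submodule_sum (N : X -> Prop) k (F : 'I_k -> X) :
  submodule N -> (forall i, N (F i)) -> N (\sum_i F i).
Proof. by move=> [N0 [ND _]] hF; elim/big_ind: _. Qed.

Lemma submoduleB (N : X -> Prop) x y : submodule N -> N x -> N y -> N (x - y).
Proof. by move=> [_ [ND NZ]] hx hy; apply: ND => //; rewrite -scaleN1r; apply: NZ. Qed.

Variables (m : R -> Prop) (N : X -> Prop).

Lemma ideal_mul0 : ideal_mul m N 0.
Proof.
by exists 0%N, (fun _ => 0), (fun _ => 0); split; [case | split; [case | rewrite big_ord0]].
Qed.

Lemma ideal_mul_gen a x : m a -> N x -> ideal_mul m N (a *: x).
Proof. by move=> ha hx; exists 1%N, (fun _ => a), (fun _ => x); rewrite big_ord1. Qed.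

Lemma ideal_mulD x y : ideal_mul m N x -> ideal_mul m N y -> ideal_mul m N (x + y).
Proof.
move=> [n1 [a1 [l1 [ha1 [hl1 ->]]]]] [n2 [a2 [l2 [ha2 [hl2 ->]]]]].
exists (n1 + n2)%N, (fun i => match split i with inl j => a1 j | inr j => a2 j end),
  (fun i => match split i with inl j => l1 j | inr j => l2 j end).
split; first by move=> i; case: (split i).
split; first by move=> i; case: (split i).
rewrite big_split_ord; congr (_ + _); apply: eq_bigr => i _.
  by rewrite (unsplitK (inl i)).
by rewrite (unsplitK (inr i)).
Qed.

Lemma ideal_mul_sum k (F : 'I_k -> X) :
  (forall i, ideal_mul m N (F i)) -> ideal_mul m N (\sum_i F i).
Proof. by move=> hF; elim/big_ind: _ => //; [exact: ideal_mul0 | exact: ideal_mulD]. Qed.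

Lemma ideal_mulZ r x : ideal m -> ideal_mul m N x -> ideal_mul m N (r *: x).
Proof.
move=> [_ [_ mM]] [n [a [l [ha [hl ->]]]]].
exists n, (fun i => r * a i), l; split=> [i | ]; first exact: mM.
by split=> //; rewrite scaler_sumr; apply: eq_bigr => i _; rewrite scalerA.
Qed.

Lemma burch_witness : submodule N -> burch m N ->
  exists x a, [/\ colon N m x, m a & ~ ideal_mul m N (a *: x)].
Proof.
move=> [_ [_ NZ]] hb; apply: NNPP => hn; apply: hb => z; split.
  move=> [n [a [l [ha [hl ->]]]]]; apply: ideal_mul_sum => i.
  by apply: NNPP => hni; apply: hn; exists (l i), (a i).
move=> [n [a [l [ha [hl ->]]]]]; exists n, a, l; split=> //; split=> // i b _; exact: NZ.
Qed.

End ModuleLemmas.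

Section BurchTor.
Variables (R : comNzRingType) (m : R -> Prop) (X : lmodType R) (N : X -> Prop).
Variables (b : nat -> nat) (D : forall i, 'M[R]_(b i.+1, b i)) (s : nat).
Hypotheses (hN : submodule N) (hDD : D s.+1 *m D s = 0).
Hypotheses (hTorN : Tor_vanishes D s.+1 N (fun y => y = 0))
           (hTorXN : Tor_vanishes D s.+1 (fun _ => True) N).

Lemma tor_scaled_pairing x a (u : 'rV_(b s.+1)) (f : 'cV_(b s.+1)) :
  ideal m -> colon N m x -> m a ->
  mx_entries_in m (u *m D s) -> mx_entries_in m (D s.+1 *m f) ->
  ideal_mul m N ((a * (u *m f) 0 0) *: x).
Proof.
move=> [_ [_ mM]] hx ha hu hf; have [_ [_ NZ]] := hN.
(* [ux] is a cycle of F (x) X/N, so [ux = D y] modulo N; then [c = a D y] is a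
   cycle of F (x) N, so [c = D z] with z in N.  Pairing [c] with [f] in two
   ways puts [a (u f) x] into mN. *)
pose ux j := u 0 j *: x.
have hux k : N (tmap (D s) ux k) by rewrite tmap_scale_row; apply: hx.
have [y [_ hy]] := hTorXN (fun _ => I) hux.
pose c j := a *: tmap (D s.+1) y j.
have hc j : N (c j).
  rewrite /c; have -> : tmap (D s.+1) y j = ux j - (ux j - tmap (D s.+1) y j).
    by rewrite opprB addrC subrK.
  rewrite scalerBr.
  by apply: submoduleB => //; [rewrite /ux scalerA mulrC; apply/hx/mM | apply: NZ].
have hc_cycle k : tmap (D s) c k = 0.
  by rewrite /c tmapZ tmap_comp hDD tmap0 scaler0.
have [z [hz hcz]] := hTorN hc hc_cycle.
have hcsum : ideal_mul m N (\sum_j f j 0 *: c j).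
  rewrite (eq_bigr (fun j => f j 0 *: tmap (D s.+1) z j)); last first.
    by move=> j _; move/eqP: (hcz j); rewrite subr_eq0 => /eqP ->.
  by rewrite sum_scale_tmap; apply: ideal_mul_sum => l; apply: ideal_mul_gen.
have -> : (a * (u *m f) 0 0) *: x =
    \sum_j f j 0 *: c j + a *: \sum_j f j 0 *: (ux j - tmap (D s.+1) y j).
  have -> : \sum_j f j 0 *: c j = a *: \sum_j f j 0 *: tmap (D s.+1) y j.
    by rewrite scaler_sumr; apply: eq_bigr => j _; rewrite /c !scalerA mulrC.
  rewrite -scalerDr -big_split -scalerA mxE scaler_suml; congr (_ *: _).
  by apply: eq_bigr => j _; rewrite /= -scalerDr addrC subrK /ux scalerA mulrC.
apply: ideal_mulD => //; apply: ideal_mul_gen => //.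
by apply: submodule_sum => // j; apply: NZ.
Qed.

Lemma burch_tor_orthogonal : local_ring m -> burch m N -> orthogonal_mod m (D s.+1) (D s).
Proof.
move=> [hm [_ hunit]] hb u f hu hf.
have [x [a [hx ha hax]]] := burch_witness hN hb.
apply: NNPP => /hunit [v hv]; apply: hax.
have -> : a *: x = v *: ((a * (u *m f) 0 0) *: x) by rewrite scalerA mulrCA hv mulr1.
exact/(ideal_mulZ _ hm)/tor_scaled_pairing.
Qed.

End BurchTor.

Section Truncation.
Variables (R : comNzRingType) (M : lmodType R).

Lemma aug0 n (g : 'I_n -> M) : aug g 0 = 0.
Proof. by rewrite /aug big1 // => j _; rewrite mxE scale0r. Qed.

Lemma augD n (g : 'I_n -> M) u v : aug g (u + v) = aug g u + aug g v.
Proof. by rewrite /aug -big_split; apply: eq_bigr => j _; rewrite mxE scalerDl. Qed.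

Lemma aug_mul n k (g : 'I_n -> M) (z : 'rV[R]_k) (E : 'M[R]_(k, n)) :
  aug g (z *m E) = aug (fun i => aug g (row i E)) z.
Proof.
rewrite /aug; under eq_bigr do rewrite mxE scaler_suml.
rewrite exchange_big /=; apply: eq_bigr => i _.
by rewrite scaler_sumr; apply: eq_bigr => j _; rewrite mxE scalerA.
Qed.

Lemma mx_exact0 n2 n0 (A : 'M[R]_(n2, 0)) (B : 'M[R]_(0, n0)) : mx_exact A B.
Proof. by move=> u; rewrite [u]thinmx0 mul0mx; split=> // _; exists 0; rewrite mul0mx. Qed.

Section Complement.
Variables (n q q' : nat) (A : 'M[R]_(n, q)) (E : 'M[R]_(q', q)).
Hypothesis hAE : free_complement A E.

Lemma ker_rowspace_complement (V : nmodType) n0 (M2 : 'M[R]_(q, n0)) (phi : 'rV_n0 -> V) :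
  A *m M2 = 0 -> ker_rowspace phi M2 -> ker_rowspace phi (E *m M2).
Proof.
move=> hAM hker u; split=> [/hker [w ->] | [w ->]].
  by have [w1 [z ->]] := hAE.1 w; exists z; rewrite mulmxDl -mulmxA hAM mulmx0 add0r mulmxA.
by apply/hker; exists (w *m E); rewrite mulmxA.
Qed.

Lemma mx_exact_complement_inj n0 (M0 : 'M[R]_(q, n0)) :
  mx_exact A M0 -> mx_exact (0 : 'M_(0, q')) (E *m M0).
Proof.
move=> hex u; split=> [| [w ->]]; last by rewrite mulmx0 mul0mx.
rewrite mulmxA => /hex [w hw]; exists 0; rewrite mulmx0.
by apply: (hAE.2 (- w)); rewrite hw mulNmx addNr.
Qed.

End Complement.

Lemma pd_lt1_of_free_complement b (D : forall i, 'M[R]_(b i.+1, b i)) (g : 'I_(b 0) -> M)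
    q' (E : 'M[R]_(q', b 0)) :
  free_resolution D g -> free_complement (D 0) E -> pd_lt M 1.
Proof.
move=> [hsurj [haug _]] [hsp hind].
pose b' i := if i is 0 then q' else 0%N.
exists b', (fun i => 0), (fun k => aug g (row k E)); split; last by case.
split=> [x | ].
  have [u ->] := hsurj x; have [w [z ->]] := hsp u; exists z.
  by rewrite augD -aug_mul (_ : aug g (w *m D 0) = 0) ?add0r //; apply/haug; exists w.
split=> [u | i]; last exact: mx_exact0.
split=> [| [w ->]]; last by rewrite mulmx0 aug0.
rewrite -aug_mul => /haug [w hw]; exists 0; rewrite mulmx0.
by apply: (hind (- w)); rewrite hw mulNmx addNr.
Qed.

(* Entries indexed by nat, to compare matrices whose sizes are only
   propositionally equal. *)
Definition mx_at m n (A : 'M[R]_(m, n)) (k l : nat) : R :=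
  match (insub k : option 'I_m), (insub l : option 'I_n) with
  | Some i, Some j => A i j
  | _, _ => 0
  end.

Lemma mx_atE m n (A : 'M[R]_(m, n)) (i : 'I_m) (j : 'I_n) : mx_at A i j = A i j.
Proof. by rewrite /mx_at !valK. Qed.

Lemma mx_exact_dim0 n2 n1 n0 (A : 'M[R]_(n2, n1)) (B : 'M[R]_(n1, n0)) :
  n1 = 0%N -> mx_exact A B.
Proof. by move=> e1; subst n1; apply: mx_exact0. Qed.

Lemma mx_exact_at n2 n1 n0 (A : 'M[R]_(n2, n1)) (B : 'M[R]_(n1, n0))
    n2' n1' n0' (A' : 'M[R]_(n2', n1')) (B' : 'M[R]_(n1', n0')) :
  n2' = n2 -> n1' = n1 -> n0' = n0 ->
  (forall k l, A' k l = mx_at A k l) -> (forall k l, B' k l = mx_at B k l) ->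
  mx_exact A B -> mx_exact A' B'.
Proof.
move=> e2 e1 e0; subst n2' n1' n0' => hA hB.
have -> : A' = A by apply/matrixP => k l; rewrite hA mx_atE.
by have -> : B' = B by apply/matrixP => k l; rewrite hB mx_atE.
Qed.

Lemma ker_rowspace_at (V : nmodType) n1 n0 (A : 'M[R]_(n1, n0)) n1' (A' : 'M[R]_(n1', n0))
    (phi : 'rV_n0 -> V) :
  n1' = n1 -> (forall k l, A' k l = mx_at A k l) ->
  ker_rowspace phi A -> ker_rowspace phi A'.
Proof.
move=> e1; subst n1' => hA.
by have -> : A' = A by apply/matrixP => k l; rewrite hA mx_atE.
Qed.

Section TruncatedResolution.
Variables (b : nat -> nat) (D : forall i, 'M[R]_(b i.+1, b i)) (g : 'I_(b 0) -> M).
Hypothesis hres : free_resolution D g.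
Variables (q' : nat).

(* The resolution F_0 <- ... <- F_s <- R^q' <- 0, where R^q' maps to F_s by
   E *m D s. *)
Definition trunc_dim s i := if (i <= s)%N then b i else if i == s.+1 then q' else 0%N.

Definition trunc_diff s (E : 'M[R]_(q', b s.+1)) i :
    'M[R]_(trunc_dim s i.+1, trunc_dim s i) :=
  \matrix_(k, l) if (i < s)%N then mx_at (D i) k l
                 else if i == s then mx_at (E *m D s) k l else 0.

Lemma trunc_dim_le s i : (i <= s)%N -> trunc_dim s i = b i.
Proof. by rewrite /trunc_dim => ->. Qed.

Lemma trunc_dim_succ s : trunc_dim s s.+1 = q'.
Proof. by rewrite /trunc_dim ltnn eqxx. Qed.

Lemma trunc_dim_gt s i : (s.+1 < i)%N -> trunc_dim s i = 0%N.
Proof. by move=> hi; rewrite /trunc_dim leqNgt (ltnW hi) gtn_eqF. Qed.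

Lemma trunc_diff_lt s (E : 'M[R]_(q', b s.+1)) i k l :
  (i < s)%N -> trunc_diff E i k l = mx_at (D i) k l.
Proof. by move=> hi; rewrite mxE hi. Qed.

Lemma trunc_diff_last s (E : 'M[R]_(q', b s.+1)) k l :
  trunc_diff E s k l = mx_at (E *m D s) k l.
Proof. by rewrite mxE ltnn eqxx. Qed.

Lemma trunc_diff_exact s (E : 'M[R]_(q', b s.+1)) i :
  free_complement (D s.+1) E -> mx_exact (trunc_diff E i.+1) (trunc_diff E i).
Proof.
have [_ [_ hex]] := hres; move=> hDE.
case: (ltngtP i.+1 s) => hi.
- apply: (mx_exact_at _ _ _ _ _ (hex i)).
  + exact: trunc_dim_le hi.
  + exact/trunc_dim_le/ltnW.
  + exact/trunc_dim_le/ltnW/ltnW.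
  + by move=> k l; apply: trunc_diff_lt.
  + by move=> k l; apply/trunc_diff_lt/ltnW.
- have [ei | hne] := eqVneq i s; last first.
    by apply: mx_exact_dim0; apply: trunc_dim_gt; rewrite ltnS ltn_neqAle eq_sym hne.
  subst i.
  apply: (mx_exact_at (A := 0 : 'M_(0, q')) _ _ _ _ _ (mx_exact_complement_inj hDE (hex s))).
  + exact: trunc_dim_gt.
  + exact: trunc_dim_succ.
  + exact: trunc_dim_le.
  + by move=> k l; have := ltn_ord k; rewrite [X in (_ < X)%N -> _]trunc_dim_gt.
  + exact: trunc_diff_last.
- subst s.
  have hDD := mx_exact_mul0 (hex i.+1).
  apply: (mx_exact_at _ _ _ _ _ (ker_rowspace_complement hDE hDD (hex i))).
  + exact: trunc_dim_succ.
  + exact: trunc_dim_le.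
  + exact/trunc_dim_le/ltnW.
  + exact: trunc_diff_last.
  + by move=> k l; apply: trunc_diff_lt.
Qed.

Lemma trunc_aug_exact s (E : 'M[R]_(q', b s.+1)) :
  free_complement (D s.+1) E -> ker_rowspace (aug g) (trunc_diff E 0).
Proof.
have [_ [haug hex]] := hres; case: s E => [|s] E hDE.
  apply: (ker_rowspace_at _ _ (ker_rowspace_complement hDE (mx_exact_mul0 (hex 0%N)) haug)).
    exact: trunc_dim_succ.
  exact: trunc_diff_last.
apply: (ker_rowspace_at _ _ haug); first exact: trunc_dim_le.
by move=> k l; apply: trunc_diff_lt.
Qed.

Lemma pd_lt_of_free_complement s (E : 'M[R]_(q', b s)) :
  free_complement (D s) E -> pd_lt M s.+1.
Proof.
case: s E => [|s] E hDE; first exact: pd_lt1_of_free_complement hres hDE.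
exists (trunc_dim s), (trunc_diff E), g; split; last exact: trunc_dim_gt.
have [hsurj _] := hres; split=> //; split; first exact: trunc_aug_exact.
by move=> i; apply: trunc_diff_exact.
Qed.

End TruncatedResolution.
End Truncation.

Theorem corollary3p13 (R : comNzRingType) (m : R -> Prop) (X M : lmodType R)
    (N : X -> Prop) (t : nat) (b : nat -> nat) (D : forall i, 'M[R]_(b i.+1, b i))
    (g : 'I_(b 0) -> M) :
  noetherian R -> local_ring m ->
  fg_module X -> submodule N -> burch m N ->
  (1 <= t)%N ->
  fg_module M -> free_resolution D g ->
  Tor_vanishes D t N (fun x => x = 0) ->
  Tor_vanishes D t (fun _ => True) N ->
  pd_lt M t.
Proof.
move=> _ hloc _ hN hb ht _ hres hTorN hTorXN.
case: t ht hTorN hTorXN => [|s] // _ hTorN hTorXN.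
have [_ [_ hex]] := hres.
have horth := burch_tor_orthogonal hN (mx_exact_mul0 (hex s)) hTorN hTorXN hloc hb.
have [q' [E hDE]] := orthogonal_mod_free_complement hloc (hex s) horth.
exact (pd_lt_of_free_complement hres hDE).
Qed.
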